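(* Let $S$ be a finite $p$-group and $\mathcal{A}$ a bifree $S$-algebra. Then $\mathcal{A}$ possesses an $(S,S)$-invariant $\mathcal{O}$-basis contained in $\mathcal{A}^\times$ if and only if for every subgroup $P\le S$ and every $\varphi\in\mathrm{Hom}_{\mathfrak{F}_S(\mathcal{A})}(P,S)$ we have $\mathcal{A}^\times\cap{}^\varphi\mathcal{A}^P\neq\emptyset$.
   Context: $\mathcal{O}$ is a complete local noetherian domain with maximal ideal $\mathfrak{m}$ and algebraically closed (hence infinite) residue field $k$ of characteristic $p$ (possibly $\mathcal{O}=k$). An interior $S$-algebra is an $\mathcal{O}$-free finite-rank $\mathcal{O}$-algebra $\mathcal{A}$ with a group homomorphism $S\to\mathcal{A}^\times$; $S\times S$ acts by $(s,t)a=sat^{-1}$. It is bifree if it has an $\mathcal{O}$-basis $Y$ with $sY=Y=Ys$ for all $s\in S$ (an $(S,S)$-invariant basis) on which the left and right $S$-actions are free. ${}^\varphi\mathcal{A}^P=\{a:\varphi(p)a=ap\ \forall p\in P\}$. For $U\le S\times S$, $\mathcal{A}(U)=\mathcal{A}^U/(\mathfrak{m}\mathcal{A}^U+\sum_{V<U}\mathrm{tr}_V^U\mathcal{A}^V)$; for injective $\varphi:P\to S$, $\mathcal{A}(\varphi)=\mathcal{A}(\Delta(\varphi,P))$ with $\Delta(\varphi,P)=\{(\varphi(p),p)\}$. $\mathfrak{F}_S(\mathcal{A})$ has objects the subgroups of $S$ and $\mathrm{Hom}(P,Q)=\{\varphi:P\to Q$ injective homomorphism$:\mathcal{A}(\varphi)\ne0\}$.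 *)

From HB Require Import structures.
From mathcomp Require Import all_boot all_order all_algebra all_fingroup all_solvable.
Set Implicit Arguments. Unset Strict Implicit. Unset Printing Implicit Defensive.
Import GRing.Theory.
Local Open Scope ring_scope.

(* membership in the maximal ideal m of a local ring: the non-units *)
Definition mideal (O : idomainType) (x : O) : Prop := x \isn't a GRing.unit.

Definition is_local (O : idomainType) : Prop :=
  forall x y : O, mideal x -> mideal y -> mideal (x + y).

Definition is_ideal (O : idomainType) (I : O -> Prop) : Prop :=
  [/\ I 0, (forall x y, I x -> I y -> I (x + y)) & (forall a x, I x -> I (a * x))].

Definition fin_gen_ideal (O : idomainType) (I : O -> Prop) : Prop :=
  exists s : seq O, (forall x, x \in s -> I x) /\
    (forall x, I x -> exists c : 'I_(size s) -> O, x = \sum_(j < size s) c j * s`_j).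

Definition noetherian (O : idomainType) : Prop :=
  forall I : O -> Prop, is_ideal I -> fin_gen_ideal I.

Fixpoint mpow (O : idomainType) (n : nat) (x : O) : Prop :=
  match n with
  | 0 => True
  | n'.+1 => exists s : seq (O * O),
      (forall q, q \in s -> mideal q.1 /\ mpow n' q.2) /\ x = \sum_(q <- s) q.1 * q.2
  end.

Definition m_complete (O : idomainType) : Prop :=
  forall u : nat -> O,
    (forall k, exists N, forall n m, (N <= n)%N -> (N <= m)%N -> mpow k (u n - u m)) ->
    exists l : O, forall k, exists N, forall n, (N <= n)%N -> mpow k (l - u n).

(* the residue field k = O/m has characteristic p *)
Definition residue_char (O : idomainType) (p : nat) : Prop :=
  prime p /\ mideal (p%:R : O).

(* the residue field k = O/m is algebraically closed: every polynomial over k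
   of positive degree (lifted to O with unit leading coefficient) has a root *)
Definition residue_alg_closed (O : idomainType) : Prop :=
  forall f : {poly O}, (1 < size f)%N -> lead_coef f \is a GRing.unit ->
    exists a : O, mideal f.[a].

Section Interior.
Variables (O : idomainType) (A : algType O) (gT : finGroupType).

Definition is_unitA (a : A) : Prop := exists b : A, a * b = 1 /\ b * a = 1.

Definition interior (S : {set gT}) (i : gT -> A) : Prop :=
  i 1%g = 1 /\ {in S &, forall x y, i (x * y)%g = i x * i y}.

Definition actA (i : gT -> A) (u : gT * gT) (a : A) : A :=
  i u.1 * a * i (u.2^-1)%g.

Definition is_basis (Y : seq A) : Prop :=
  (forall c : 'I_(size Y) -> O, \sum_(j < size Y) c j *: Y`_j = 0 -> forall j, c j = 0) /\
  (forall a : A, exists c : 'I_(size Y) -> O, a = \sum_(j < size Y) c j *: Y`_j).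

Definition inv_basis (S : {set gT}) (i : gT -> A) (Y : seq A) : Prop :=
  forall s, s \in S ->
    [seq i s * y | y <- Y] =i Y /\ [seq y * i s | y <- Y] =i Y.

Definition bifree (S : {set gT}) (i : gT -> A) : Prop :=
  exists Y : seq A, [/\ is_basis Y, inv_basis S i Y &
    forall s y, s \in S -> y \in Y -> (i s * y = y -> s = 1%g) /\ (y * i s = y -> s = 1%g)].

Definition fixedU (i : gT -> A) (U : {set gT * gT}) (a : A) : Prop :=
  forall u, u \in U -> actA i u a = a.

Definition trA (i : gT -> A) (U V : {set gT * gT}) (a : A) : A :=
  \sum_(C in lcosets V U) actA i (repr C) a.

Definition in_bq_kernel (i : gT -> A) (U : {set gT * gT}) (b : A) : Prop :=
  exists (s : seq (O * A)) (c : {group gT * gT} -> A),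
    [/\ (forall q, q \in s -> mideal q.1 /\ fixedU i U q.2),
        (forall V : {group gT * gT}, V \proper U -> fixedU i V (c V)) &
        b = \sum_(q <- s) q.1 *: q.2
            + \sum_(V : {group gT * gT} | V \proper U) trA i U V (c V)].

Definition brauer_nonzero (i : gT -> A) (U : {set gT * gT}) : Prop :=
  exists a : A, fixedU i U a /\ ~ in_bq_kernel i U a.

Definition Delta (phi : gT -> gT) (P : {set gT}) : {set gT * gT} :=
  [set (phi x, x) | x in P].

Definition inj_hom (P Q : {set gT}) (phi : gT -> gT) : Prop :=
  [/\ {in P &, forall x y, phi (x * y)%g = (phi x * phi y)%g},
      {in P &, injective phi} & forall x, x \in P -> phi x \in Q].

Definition FHom (i : gT -> A) (P Q : {set gT}) (phi : gT -> gT) : Prop :=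
  inj_hom P Q phi /\ brauer_nonzero i (Delta phi P).

Definition twisted_fixed (i : gT -> A) (P : {set gT}) (phi : gT -> gT) (a : A) : Prop :=
  forall x, x \in P -> i (phi x) * a = a * i x.

End Interior.

(* If [Y] is an invariant basis of units and [A(Delta(phi, P)) <> 0], some
   element of [Y] is fixed by [Delta(phi, P)]: otherwise every fixed element
   is a sum of relative traces from the proper stabilisers of the orbits of
   [Delta(phi, P)] on [Y]. That element is a unit of [^phi A^P].
   Conversely, let [Y] be a bifree invariant basis. Each [y] in [Y] defines an
   injective [phi_y : P_y -> S] by [phi_y(t) y = y t], and [Delta(phi_y, P_y)]
   is a p-group fixing [y]; the [y]-coordinate vanishes modulo the maximal
   ideal on the kernel of the Brauer quotient, since proper subgroups of a
   p-group have index divisible by p. So [phi_y] lies in [F_S(A)] and gives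
   a unit [u_y] of [^phi_y A^P_y]. Transported along the [S x S]-orbits of
   [Y], the [u_y] form an equivariant family of units [w_y], and for every
   scalar [l] the family [y + l (w_y - y)] is invariant. It is a basis of
   units as soon as finitely many determinant polynomials in [l], unit-valued
   at [l = 0] or [l = 1], take unit values at [l]; the residue field being
   infinite, such an [l] exists. *)

From HB Require Import structures.
From mathcomp Require Import all_boot all_order all_algebra all_fingroup all_solvable.
Set Implicit Arguments. Unset Strict Implicit. Unset Printing Implicit Defensive.
Import GRing.Theory.
Local Open Scope ring_scope.

Section LocalRing.
Variables (O : idomainType) (O_local : is_local O).

Lemma mideal0 : mideal (0 : O).
Proof. by rewrite /mideal unitr0. Qed.

Lemma mideal1 : ~ mideal (1 : O).
Proof. by rewrite /mideal unitr1. Qed.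

Lemma mideal_mulr (a x : O) : mideal x -> mideal (x * a).
Proof. by rewrite /mideal unitrM => /negbTE->. Qed.

Lemma mideal_mulr_unit (u x : O) : u \is a GRing.unit -> mideal (x * u) -> mideal x.
Proof. by rewrite /mideal unitrM => ->; rewrite andbT. Qed.

Lemma mideal_sub (x y : O) : mideal x -> mideal y -> mideal (x - y).
Proof. by move=> mx my; apply: O_local => //; rewrite /mideal unitrN. Qed.

Lemma mideal_sum (I : Type) (r : seq I) (P : pred I) (F : I -> O) :
  (forall j, P j -> mideal (F j)) -> mideal (\sum_(j <- r | P j) F j).
Proof.
by move=> mF; apply: big_ind; [exact: mideal0 | exact: O_local | exact: mF].
Qed.

Lemma unit_add_mideal (u x : O) :
  u \is a GRing.unit -> mideal x -> (u + x) \is a GRing.unit.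
Proof.
move=> uu mx; apply/negPn/negP => mux.
by have := mideal_sub mux mx; rewrite addrK /mideal uu.
Qed.

(* Pairwise distinct modulo the maximal ideal. *)
Definition unit_separated (L : seq O) : bool :=
  pairwise (fun a b => (a - b) \is a GRing.unit) L.

Lemma mideal_horner_separated (L : seq O) (f : {poly O}) :
  unit_separated L -> (size f <= size L)%N -> {in L, forall x, mideal f.[x]} ->
  forall b, mideal f.[b].
Proof.
elim: L f => [|a L IH] f.
  by move=> _; rewrite leqn0 size_poly_eq0 => /eqP-> _ b; rewrite horner0; apply: mideal0.
rewrite /unit_separated pairwise_cons => /andP[/allP a_sep L_sep] size_f f_L b.
have /factor_theorem[q f_eq] : root (f - f.[a]%:P) a by rewrite /root !hornerE subrr.
have fa := f_L a (mem_head a L).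
have q_L : {in L, forall x, mideal q.[x]}.
  move=> x xL; apply: (mideal_mulr_unit (u := x - a)); first by rewrite -opprB unitrN a_sep.
  have fx : mideal f.[x] by apply: f_L; rewrite inE xL orbT.
  suff <- : f.[x] - f.[a] = q.[x] * (x - a) by apply: mideal_sub.
  by rewrite -[x - a]hornerXsubC -hornerM -f_eq !hornerE.
have size_q : (size q <= size L)%N.
  have [->|q_neq0] := eqVneq q 0; first by rewrite size_poly0.
  rewrite -ltnS; have := size_polyD f (- f.[a]%:P).
  rewrite f_eq size_mul ?polyXsubC_eq0 // size_XsubC addn2 size_polyN /=.
  move/leq_trans; apply; rewrite geq_max size_f (leq_trans (size_polyC_leq1 _)) //.
rewrite -[f](subrK f.[a]%:P) f_eq !hornerE.
by apply: O_local; [apply: mideal_mulr; apply: IH | ].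
Qed.

Variable k_closed : residue_alg_closed O.

Lemma exists_unit_away (L : seq O) : exists a, all (fun x => (a - x) \is a GRing.unit) L.
Proof.
pose f := \prod_(x <- 0 :: L) ('X - x%:P) + 1.
have size_prod : (size (1%R : {poly O}) < size (\prod_(x <- 0 :: L) ('X - x%:P))%R)%N.
  by rewrite size_poly1 size_prod_XsubC.
have size_f : (1 < size f)%N by rewrite size_polyDl // size_prod_XsubC.
have lead_f : lead_coef f \is a GRing.unit.
  by rewrite lead_coefDl // (monicP (monic_prod_XsubC _ _ _)) unitr1.
have [a fa] := k_closed size_f lead_f; exists a.
have : (\prod_(x <- 0 :: L) (a - x)) \is a GRing.unit.
  rewrite -[X in X \is a _](addrK 1) addrC.
  apply: unit_add_mideal; first by rewrite unitrN unitr1.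
  by move: fa; rewrite /f hornerD horner_prod hornerC; under eq_bigr do rewrite hornerXsubC.
by move=> /unitr_prodP a_away; apply/allP => x xL; apply: a_away => //; apply: mem_behead.
Qed.

Lemma exists_unit_separated (N : nat) : exists L, size L = N /\ unit_separated L.
Proof.
elim: N => [|N [L [size_L L_sep]]]; first by exists [::].
have [a a_away] := exists_unit_away L.
by exists (a :: L); rewrite /unit_separated pairwise_cons /= size_L a_away.
Qed.

(* On a unit-separated list longer than [\sum size f], each [f] has fewer
   than [size f] non-unit values. *)
Lemma exists_common_unit_value (fs : seq {poly O}) :
  {in fs, forall f, exists a, f.[a] \is a GRing.unit} ->
  exists l, {in fs, forall f, f.[l] \is a GRing.unit}.
Proof.
move=> fs_unit; pose bad (f : {poly O}) x := f.[x] \isn't a GRing.unit.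
have [L [size_L L_sep]] := exists_unit_separated (\sum_(f <- fs) size f).+1.
have count_bad f : f \in fs -> (count (bad f) L < size f)%N.
  move=> ffs; rewrite ltnNge; apply/negP => size_le.
  have [a fa] := fs_unit f ffs; have := fa.
  have := mideal_horner_separated (pairwise_filter (bad f) L_sep) (f := f).
  rewrite size_filter => /(_ size_le) mfa.
  by rewrite (negPf (mfa _ a)) // => x; rewrite mem_filter => /andP[].
have count_has : (count (fun x => has (bad^~ x) fs) L <= \sum_(f <- fs) count (bad f) L)%N.
  elim: (fs) => [|f gs IH]; first by rewrite big_nil count_pred0.
  rewrite big_cons (leq_trans _ (leq_add (leqnn _) IH)) // -count_predUI.
  by apply: leq_trans (leq_addr _ _); apply: sub_count => x /=.
have : (0 < count (predC (fun x => has (bad^~ x) fs)) L)%N.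
  rewrite -(ltn_add2l (count (fun x => has (bad^~ x) fs) L)) addn0 count_predC size_L ltnS.
  apply: leq_trans count_has _; rewrite big_seq_cond [X in (_ <= X)%N]big_seq_cond.
  by apply: leq_sum => f /andP[ffs _]; apply: ltnW; apply: count_bad.
rewrite -has_count => /hasP[l _ /= /hasPn l_good]; exists l => f /l_good.
by rewrite negbK.
Qed.

End LocalRing.

Section Coordinates.
Variables (O : idomainType) (A : algType O).

Definition is_fbasis (n : nat) (e : 'I_n -> A) : Prop :=
  (forall c : 'I_n -> O, \sum_(j < n) c j *: e j = 0 -> forall j, c j = 0) /\
  (forall a : A, exists c : 'I_n -> O, a = \sum_(j < n) c j *: e j).

Lemma is_basis_fbasis (Y : seq A) (n : nat) (e : 'I_n -> A) :
  size Y = n -> (forall j : 'I_n, Y`_j = e j) -> is_fbasis e -> is_basis Y.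
Proof.
move=> size_Y; case: n / size_Y e => e Y_e [e_free e_span]; split.
  by move=> c; under eq_bigr do rewrite Y_e; apply: e_free.
by move=> a; have [c ->] := e_span a; exists c; apply: eq_bigr => j _; rewrite Y_e.
Qed.

Variables (n : nat) (e : 'I_n -> A) (e_basis : is_fbasis e).

Definition comb (c : 'rV[O]_n) : A := \sum_j c 0 j *: e j.

Fact comb_is_linear : linear comb.
Proof.
move=> x c d; rewrite /comb scaler_sumr -big_split.
by apply: eq_bigr => j _; rewrite !mxE scalerDl scalerA.
Qed.

HB.instance Definition _ := GRing.isLinear.Build O 'rV[O]_n A *:%R comb comb_is_linear.

Lemma comb_inj : injective comb.
Proof.
move=> c d cd; apply/rowP => j; apply/eqP; rewrite -subr_eq0; apply/eqP.
apply: (e_basis.1 (fun j => c 0 j - d 0 j)).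
by under eq_bigr do rewrite scalerBl; rewrite sumrB -!/(comb _) cd subrr.
Qed.

Lemma comb_surj (a : A) : exists c, comb c == a.
Proof.
have [c ->] := e_basis.2 a; exists (\row_j c j).
by apply/eqP/eq_bigr => j _; rewrite mxE.
Qed.

Definition coord_row (a : A) : 'rV[O]_n := xchoose (comb_surj a).

Lemma coord_rowK : cancel coord_row comb.
Proof. by move=> a; apply/eqP/(xchooseP (comb_surj a)). Qed.

Lemma combK : cancel comb coord_row.
Proof. by move=> c; apply: comb_inj; rewrite coord_rowK. Qed.

Lemma coord_rowD a b : coord_row (a + b) = coord_row a + coord_row b.
Proof. by apply: comb_inj; rewrite linearD /= !coord_rowK. Qed.

Lemma coord_rowZ x a : coord_row (x *: a) = x *: coord_row a.
Proof. by apply: comb_inj; rewrite linearZ /= !coord_rowK. Qed.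

Lemma coord_row_sum (I : Type) (r : seq I) (P : pred I) (F : I -> A) :
  coord_row (\sum_(x <- r | P x) F x) = \sum_(x <- r | P x) coord_row (F x).
Proof.
by apply: (big_morph coord_row coord_rowD); apply: comb_inj; rewrite coord_rowK linear0.
Qed.

Lemma comb_delta k : comb (delta_mx 0 k) = e k.
Proof.
rewrite /comb (bigD1 k) //= mxE !eqxx scale1r big1 ?addr0 // => j /negPf jk.
by rewrite mxE jk andbF scale0r.
Qed.

Lemma coord_row_basis k : coord_row (e k) = delta_mx 0 k.
Proof. by rewrite -comb_delta combK. Qed.

Lemma comb_row (B : 'M[O]_n) (c : 'rV[O]_n) :
  comb (c *m B) = \sum_j c 0 j *: comb (row j B).
Proof.
rewrite /comb; under [RHS]eq_bigr do rewrite scaler_sumr.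
rewrite exchange_big /=; apply: eq_bigr => k _.
by rewrite mxE scaler_suml; apply: eq_bigr => j _; rewrite mxE scalerA.
Qed.

Lemma fbasis_unit_det (B : 'M[O]_n) :
  \det B \is a GRing.unit -> is_fbasis (fun j => comb (row j B)).
Proof.
rewrite -unitmxE => B_unit; split.
  move=> c c0 j.
  have cB0 : (\row_k c k) *m B = 0.
    by apply: comb_inj; rewrite linear0 comb_row -[RHS]c0; apply: eq_bigr => k _; rewrite mxE.
  have := congr1 (mulmx^~ (invmx B)) cB0.
  by rewrite mulmxK // mul0mx => /rowP/(_ j); rewrite !mxE.
move=> a; exists (fun j => (coord_row a *m invmx B) 0 j).
by rewrite -comb_row mulmxKV // coord_rowK.
Qed.

Definition lmul_mx (x : A) : 'M[O]_n := \matrix_j coord_row (x * e j).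

Lemma comb_lmul x c : x * comb c = comb (c *m lmul_mx x).
Proof.
rewrite comb_row {1}/comb mulr_sumr; apply: eq_bigr => j _.
by rewrite -scalerAr rowK coord_rowK.
Qed.

Lemma lmul_mxM x y : lmul_mx (x * y) = lmul_mx y *m lmul_mx x.
Proof.
apply/row_matrixP => j; apply: comb_inj.
by rewrite row_mul !rowK -comb_lmul !coord_rowK mulrA.
Qed.

Lemma lmul_mx1 : lmul_mx 1 = 1%:M.
Proof. by apply/row_matrixP => j; rewrite rowK mul1r coord_row_basis row1. Qed.

Lemma lmul_mx_inj : injective lmul_mx.
Proof.
by move=> x y xy; rewrite -[x]mulr1 -[y]mulr1 -(coord_rowK 1) !comb_lmul xy.
Qed.

Fact lmul_mx_is_linear : linear lmul_mx.
Proof.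
move=> a x y; apply/matrixP => j k.
by rewrite !mxE mulrDl -scalerAl coord_rowD coord_rowZ !mxE.
Qed.

HB.instance Definition _ := GRing.isLinear.Build O A 'M[O]_n *:%R lmul_mx lmul_mx_is_linear.

Lemma is_unitA_det (x : A) : is_unitA x <-> \det (lmul_mx x) \is a GRing.unit.
Proof.
split=> [[y [xy yx]]|].
  apply/unitrP; exists (\det (lmul_mx y)).
  by rewrite -!det_mulmx -!lmul_mxM xy yx lmul_mx1 det1.
rewrite -unitmxE => x_unit; pose y := comb (coord_row 1 *m invmx (lmul_mx x)).
have xy : x * y = 1 by rewrite comb_lmul mulmxKV // coord_rowK.
have yx : lmul_mx (y * x) = 1%:M.
  by rewrite lmul_mxM -[lmul_mx y](mulmxK x_unit) -lmul_mxM xy lmul_mx1 mul1mx mulmxV.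
by exists y; split; last by apply: lmul_mx_inj; rewrite yx lmul_mx1.
Qed.

End Coordinates.

Definition det_lerp (O : idomainType) n (M0 M1 : 'M[O]_n) : {poly O} :=
  \det (map_mx polyC M0 + 'X *: map_mx polyC (M1 - M0)).

Lemma horner_det_lerp (O : idomainType) n (M0 M1 : 'M[O]_n) (l : O) :
  (det_lerp M0 M1).[l] = \det (M0 + l *: (M1 - M0)).
Proof.
rewrite -horner_evalE -det_map_mx; congr (\det _); apply/matrixP => j k.
by rewrite !mxE rmorphD rmorphM /= !horner_evalE !hornerE.
Qed.

Section InteriorAction.
Variables (O : idomainType) (A : algType O) (gT : finGroupType) (S : {group gT}).
Variables (i : gT -> A) (i_int : interior S i).

Local Notation SS := (setX S S).

Lemma interior1 : i 1%g = 1. Proof. by case: i_int. Qed.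

Lemma interiorM : {in S &, {morph i : s t / (s * t)%g >-> s * t}}.
Proof. by case: i_int. Qed.

Lemma interiorVr s : s \in S -> i s * i s^-1%g = 1.
Proof. by move=> sS; rewrite -interiorM ?groupV // mulgV interior1. Qed.

Lemma interiorVl s : s \in S -> i s^-1%g * i s = 1.
Proof. by move=> sS; rewrite -{2}[s]invgK interiorVr ?groupV. Qed.

Lemma is_unitA_mul (a b : A) : is_unitA a -> is_unitA b -> is_unitA (a * b).
Proof.
move=> [a' [aa' a'a]] [b' [bb' b'b]]; exists (b' * a'); split.
  by rewrite mulrA -(mulrA a) bb' mulr1 aa'.
by rewrite mulrA -(mulrA b') a'a mulr1 b'b.
Qed.

Lemma is_unitA_interior s : s \in S -> is_unitA (i s).
Proof. by move=> sS; exists (i s^-1%g); rewrite interiorVr ?interiorVl. Qed.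

Lemma actA1 a : actA i 1%g a = a.
Proof. by rewrite /actA invg1 interior1 mul1r mulr1. Qed.

Lemma actAM u v a : u \in SS -> v \in SS -> actA i (u * v)%g a = actA i u (actA i v a).
Proof.
rewrite !inE => /andP[u1 u2] /andP[v1 v2].
by rewrite /actA /= invMg !interiorM ?groupV // !mulrA.
Qed.

Lemma actA_is_unitA u a : u \in SS -> is_unitA a -> is_unitA (actA i u a).
Proof.
rewrite inE => /andP[u1 u2] a_unit.
apply: is_unitA_mul; first apply: is_unitA_mul => //.
  exact: is_unitA_interior.
by apply: is_unitA_interior; rewrite groupV.
Qed.

Lemma actAD u a b : actA i u (a + b) = actA i u a + actA i u b.
Proof. by rewrite /actA mulrDr mulrDl. Qed.

Lemma actAB u a b : actA i u (a - b) = actA i u a - actA i u b.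
Proof. by rewrite /actA mulrBr mulrBl. Qed.

Lemma actAZ u (x : O) a : actA i u (x *: a) = x *: actA i u a.
Proof. by rewrite /actA -scalerAr -scalerAl. Qed.

Lemma actA_sum u (I : Type) (r : seq I) (P : pred I) (F : I -> A) :
  actA i u (\sum_(x <- r | P x) F x) = \sum_(x <- r | P x) actA i u (F x).
Proof. by rewrite /actA mulr_sumr mulr_suml. Qed.

Lemma trAZ U V (x : O) a : trA i U V (x *: a) = x *: trA i U V a.
Proof. by rewrite /trA scaler_sumr; apply: eq_bigr => C _; rewrite actAZ. Qed.

Lemma trA_sum U V (I : Type) (r : seq I) (P : pred I) (F : I -> A) :
  trA i U V (\sum_(x <- r | P x) F x) = \sum_(x <- r | P x) trA i U V (F x).
Proof. by rewrite /trA (eq_bigr _ (fun C _ => actA_sum _ _ _ _)) exchange_big. Qed.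

Lemma actA_fixedE s t a : t \in S -> actA i (s, t) a = a <-> i s * a = a * i t.
Proof.
move=> tS; rewrite /actA /=; split=> [fixed | twisted].
  by rewrite -{2}fixed -mulrA interiorVl ?mulr1.
by rewrite twisted -mulrA interiorVr ?mulr1.
Qed.

End InteriorAction.

Lemma mideal_index (O : idomainType) (p : nat) (gT : finGroupType) (U V : {group gT}) :
  residue_char O p -> (p.-group U)%g -> V \proper U -> mideal (#|U : V|%g%:R : O).
Proof.
move=> [_ p_mideal] pU /properP[_ [x xU xV]].
have index_gt1 : (1 < #|U : V|%g)%N by rewrite indexg_gt1; apply/subsetPn; exists x.
have /p_natP[[|e] index_eq] := pnat_dvd (dvdn_indexg U V) pU.
  by rewrite index_eq in index_gt1.
by rewrite index_eq expnS natrM; apply: mideal_mulr.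
Qed.

Lemma mem_repr_lcosets (gT : finGroupType) (U V : {group gT}) C :
  V \subset U -> C \in lcosets V U -> repr C \in U.
Proof.
move=> VU /lcosetsP[x xU ->].
have := mem_repr _ (lcoset_refl V x); rewrite mem_lcoset => xrV.
by rewrite -(mulKVg x (repr _)) groupM // (subsetP VU).
Qed.

Section Delta.
Variable gT : finGroupType.

Lemma group_set_Delta (P : {group gT}) (phi : gT -> gT) :
  {in P &, {morph phi : x y / (x * y)%g}} -> group_set (Delta phi P).
Proof.
move=> phiM; have phi1 : phi 1%g = 1%g.
  by apply: (mulgI (phi 1%g)); rewrite -phiM ?mulg1.
apply/group_setP; split; first by apply/imsetP; exists 1%g; rewrite ?phi1.
move=> _ _ /imsetP[x xP ->] /imsetP[y yP ->]; apply/imsetP.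
by exists (x * y)%g; rewrite ?groupM ?phiM.
Qed.

Lemma card_Delta (P : {set gT}) (phi : gT -> gT) : #|Delta phi P| = #|P|.
Proof. by apply: card_in_imset => x y _ _ [_ ->]. Qed.

Lemma Delta_sub (S P : {set gT}) (phi : gT -> gT) :
  P \subset S -> {in P, forall x, phi x \in S} -> Delta phi P \subset setX S S.
Proof.
move=> PS phiS; apply/subsetP => _ /imsetP[x xP ->].
by rewrite in_setX phiS //= (subsetP PS).
Qed.

End Delta.

Section InvariantBasis.
Variables (O : idomainType) (A : algType O) (gT : finGroupType) (S : {group gT}).
Variables (i : gT -> A) (i_int : interior S i).
Variables (Y : seq A) (Y_basis : is_basis Y) (Y_inv : inv_basis S i Y).

Local Notation SS := (setX S S).
Local Notation n := (size Y).

Definition bvec (k : 'I_n) : A := Y`_k.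

Lemma bvec_basis : is_fbasis bvec. Proof. exact: Y_basis. Qed.

Local Notation coord a k := (coord_row bvec_basis a 0 k).

Lemma coord_bvec k l : coord (bvec k) l = (k == l)%:R.
Proof. by rewrite coord_row_basis mxE eqxx eq_sym. Qed.

Lemma bvec_inj : injective bvec.
Proof.
move=> k l kl; have := coord_bvec k k; rewrite kl coord_bvec eqxx.
by case: eqP => // _ /eqP; rewrite eq_sym oner_eq0.
Qed.

Lemma actA_mem u y : u \in SS -> y \in Y -> actA i u y \in Y.
Proof.
rewrite inE => /andP[u1 u2] yY; have [left_inv _] := Y_inv u1.
have [_ right_inv] := Y_inv (groupVr u2).
by rewrite /actA -right_inv; apply: map_f; rewrite -left_inv; apply: map_f.
Qed.

Definition act_idx (u : gT * gT) (k : 'I_n) : 'I_n :=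
  odflt k [pick l | bvec l == actA i u (bvec k)].

Lemma act_idxE u k : u \in SS -> bvec (act_idx u k) = actA i u (bvec k).
Proof.
move=> uS; rewrite /act_idx; case: pickP => [l /eqP //|no_l].
have /(nthP 0)[l lY Yl] := actA_mem uS (mem_nth 0 (ltn_ord k)).
by have := no_l (Ordinal lY); rewrite /bvec /= Yl eqxx.
Qed.

Lemma act_idx1 k : act_idx 1%g k = k.
Proof. by apply: bvec_inj; rewrite act_idxE ?group1 // (actA1 i_int). Qed.

Lemma act_idxM u v k :
  u \in SS -> v \in SS -> act_idx (u * v)%g k = act_idx u (act_idx v k).
Proof. by move=> uS vS; apply: bvec_inj; rewrite !act_idxE ?groupM // (actAM i_int). Qed.

Lemma act_idxK u : u \in SS -> cancel (act_idx u) (act_idx u^-1%g).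
Proof. by move=> uS k; rewrite -act_idxM ?groupV // mulVg act_idx1. Qed.

Lemma act_idxKV u : u \in SS -> cancel (act_idx u^-1%g) (act_idx u).
Proof. by move=> uS k; rewrite -{1}[u]invgK act_idxK ?groupV. Qed.

Lemma coord_actA u a k : u \in SS -> coord (actA i u a) (act_idx u k) = coord a k.
Proof.
move=> uS; rewrite -{1}[a](coord_rowK bvec_basis) /comb actA_sum coord_row_sum summxE.
rewrite (bigD1 k) //= big1 ?addr0 => [|l lk];
  rewrite actAZ coord_rowZ -act_idxE // mxE coord_bvec.
  by rewrite eqxx mulr1.
by rewrite (inj_eq (can_inj (act_idxK uS))) (negPf lk) mulr0.
Qed.

Lemma inv_basis_equivariant (f : 'I_n -> A) :
  (forall v k, v \in SS -> actA i v (f k) = f (act_idx v k)) ->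
  inv_basis S i [seq f k | k <- enum 'I_n].
Proof.
move=> f_equi; set F := [seq f k | k <- enum 'I_n].
have actA_F v : v \in SS -> [seq actA i v y | y <- F] =i F.
  move=> vS y; rewrite -map_comp; apply/mapP/mapP => [[k _ ->]|[k _ ->]] /=.
    by exists (act_idx v k); rewrite ?mem_enum ?f_equi.
  by exists (act_idx v^-1%g k); rewrite ?mem_enum //= f_equi ?act_idxKV.
move=> s sS; split.
  have -> : [seq i s * y | y <- F] = [seq actA i (s, 1%g) y | y <- F].
    by apply: eq_map => y; rewrite /actA /= invg1 (interior1 i_int) mulr1.
  by apply: actA_F; rewrite inE /= sS group1.
have -> : [seq y * i s | y <- F] = [seq actA i (1%g, s^-1%g) y | y <- F].
  by apply: eq_map => y; rewrite /actA /= invgK (interior1 i_int) mul1r.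
by apply: actA_F; rewrite inE /= groupV sS group1.
Qed.

Section Orbits.
Variables (U : {group gT * gT}) (US : U \subset SS).

Let inSS u : u \in U -> u \in SS. Proof. exact: (subsetP US). Qed.

Definition orbit_idx (k : 'I_n) : {set 'I_n} := [set act_idx u k | u in U].

Definition stab_idx (k : 'I_n) : {set gT * gT} := [set u in U | act_idx u k == k].

Lemma group_set_stab_idx k : group_set (stab_idx k).
Proof.
apply/group_setP; split; first by rewrite inE group1 act_idx1 eqxx.
move=> u v; rewrite !inE => /andP[uU /eqP uk] /andP[vU /eqP vk].
by rewrite groupM // act_idxM ?inSS // vk uk eqxx.
Qed.

Canonical stab_idx_group k := Group (group_set_stab_idx k).

Lemma stab_idx_sub k : stab_idx k \subset U.
Proof. by apply/subsetP => u; rewrite inE => /andP[]. Qed.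

Lemma orbit_idx_refl k : k \in orbit_idx k.
Proof. by apply/imsetP; exists 1%g; rewrite ?act_idx1. Qed.

Lemma orbit_idx_sym k l : l \in orbit_idx k -> k \in orbit_idx l.
Proof.
case/imsetP=> u uU ->; apply/imsetP; exists u^-1%g; first by rewrite groupV.
by rewrite act_idxK ?inSS.
Qed.

Lemma orbit_idx_eq k l : l \in orbit_idx k -> orbit_idx l = orbit_idx k.
Proof.
case/imsetP=> u uU ->; apply/setP => m; apply/imsetP/imsetP => [[v vU ->]|[v vU ->]].
  by exists (v * u)%g; rewrite ?groupM ?act_idxM ?inSS.
exists (v * u^-1)%g; first by rewrite groupM ?groupV.
by rewrite act_idxM ?groupV ?inSS // act_idxK ?inSS.
Qed.

Definition orbit_rep (k : 'I_n) : 'I_n := odflt k [pick l in orbit_idx k].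

Lemma orbit_rep_mem k : orbit_rep k \in orbit_idx k.
Proof. by rewrite /orbit_rep; case: pickP => [//|/(_ k)]; rewrite orbit_idx_refl. Qed.

Lemma orbit_rep_eq k l : l \in orbit_idx k -> orbit_rep l = orbit_rep k.
Proof.
move=> lk; rewrite /orbit_rep (orbit_idx_eq lk).
by case: pickP => // /(_ k); rewrite orbit_idx_refl.
Qed.

Lemma orbit_repK k : orbit_rep (orbit_rep k) = orbit_rep k.
Proof. exact/orbit_rep_eq/orbit_rep_mem. Qed.

Lemma orbit_rep_eqE r k : orbit_rep r = r -> (orbit_rep k == r) = (k \in orbit_idx r).
Proof.
move=> rr; apply/eqP/idP => [<-|kr]; last by rewrite (orbit_rep_eq kr).
exact/orbit_idx_sym/orbit_rep_mem.
Qed.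

Definition orbit_mover (k : 'I_n) : gT * gT :=
  odflt 1%g [pick u in U | act_idx u (orbit_rep k) == k].

Lemma orbit_moverP k : orbit_mover k \in U /\ act_idx (orbit_mover k) (orbit_rep k) = k.
Proof.
rewrite /orbit_mover; case: pickP => [u /andP[uU /eqP //]|no_u].
have /imsetP[u uU uk] := orbit_idx_sym (orbit_rep_mem k).
by have := no_u u; rewrite uU -uk eqxx.
Qed.

Lemma act_idx_repr_lcoset k u :
  u \in U -> act_idx (repr (u *: stab_idx k)%g) k = act_idx u k.
Proof.
move=> uU; have := mem_repr _ (lcoset_refl (stab_idx k) u).
rewrite mem_lcoset inE => /andP[vU /eqP fixed_k].
by rewrite -(mulKVg u (repr _)) act_idxM ?fixed_k ?inSS.
Qed.

Lemma act_idx_repr_inj k :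
  {in lcosets (stab_idx k) U &, injective (fun C => act_idx (repr C) k)}.
Proof.
move=> _ _ /lcosetsP[x xU ->] /lcosetsP[y yU ->]; rewrite /= !act_idx_repr_lcoset // => xy.
apply/lcoset_eqP; rewrite mem_lcoset inE groupM ?groupV //=.
by rewrite act_idxM ?groupV ?inSS // xy act_idxK ?inSS.
Qed.

Lemma trA_stab_idx k : trA i U (stab_idx k) (bvec k) = \sum_(l in orbit_idx k) bvec l.
Proof.
rewrite /trA (eq_bigr (fun C => bvec (act_idx (repr C) k))) => [|C]; last first.
  by move/(mem_repr_lcosets (stab_idx_sub k)) => CU; rewrite act_idxE ?inSS.
rewrite -(big_imset bvec (@act_idx_repr_inj k)) /=.
apply: eq_bigl => l; apply/imsetP/imsetP => [[_ /lcosetsP[u uU ->] ->]|[u uU ->]].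
  by exists u; rewrite ?act_idx_repr_lcoset.
by exists (u *: stab_idx k)%g; rewrite ?act_idx_repr_lcoset //; apply/lcosetsP; exists u.
Qed.

Lemma coord_fixedU a r l : fixedU i U a -> l \in orbit_idx r -> coord a l = coord a r.
Proof. by move=> fa /imsetP[u uU ->]; rewrite -{1}(fa u uU) coord_actA ?inSS. Qed.

Lemma coord_trA (V : {group gT * gT}) c k :
  V \subset U -> {in U, forall u, act_idx u k = k} ->
  coord (trA i U V c) k = #|U : V|%g%:R * coord c k.
Proof.
move=> VU k_fixed; rewrite /trA coord_row_sum summxE.
rewrite (eq_bigr (fun _ => coord c k)) => [|C /(mem_repr_lcosets VU) CU]; last first.
  by rewrite -{1}(k_fixed _ CU) coord_actA ?inSS.
by rewrite sumr_const card_lcosets mulr_natl.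
Qed.

Lemma bvec_notin_bq_kernel p k : is_local O -> residue_char O p -> (p.-group U)%g ->
  {in U, forall u, act_idx u k = k} -> ~ in_bq_kernel i U (bvec k).
Proof.
move=> O_local k_char pU k_fixed [s [c [s_fixed _ bvec_eq]]]; apply: (@mideal1 O).
have := congr1 (fun b => coord b k) bvec_eq; rewrite /= coord_bvec eqxx mulr1n coord_rowD mxE.
rewrite !coord_row_sum !summxE => ->; apply: (O_local).
  rewrite big_seq; apply: (mideal_sum O_local) => q qs; have [q1_mideal _] := s_fixed q qs.
  by rewrite coord_rowZ mxE; apply: mideal_mulr.
apply: (mideal_sum O_local) => V /[dup] VU /properP[VU' _].
by rewrite coord_trA //; apply: mideal_mulr; apply: mideal_index k_char pU VU.
Qed.

Lemma bq_kernel_fixedpoint_free a :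
  (forall k, stab_idx k \proper U) -> fixedU i U a -> in_bq_kernel i U a.
Proof.
move=> stab_proper fa; pose is_rep r := orbit_rep r == r.
pose c (V : {group gT * gT}) :=
  \sum_(r | is_rep r && (stab_idx_group r == V)) coord a r *: bvec r.
exists [::], c; split=> // [V VU u uV|].
  rewrite /c actA_sum; apply: eq_bigr => r /andP[_ /eqP rV].
  have:= uV; rewrite -rV inE => /andP[uU /eqP ur].
  by rewrite actAZ -act_idxE ?inSS ?ur.
rewrite big_nil add0r /c (eq_bigr (fun V => \sum_(r | is_rep r && (stab_idx_group r == V))
    coord a r *: trA i U (stab_idx r) (bvec r))) => [|V _]; last first.
  by rewrite trA_sum; apply: eq_bigr => r /andP[_ /eqP <-]; rewrite trAZ.
rewrite -(partition_big (fun r => stab_idx_group r) (fun V => V \proper U)) /=; last first.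
  by move=> r _; apply: stab_proper.
rewrite -{1}[a](coord_rowK bvec_basis) /comb (partition_big orbit_rep is_rep) /=; last first.
  by move=> l _; rewrite /is_rep orbit_repK.
apply: eq_bigr => r /eqP rr; rewrite trA_stab_idx scaler_sumr.
apply: eq_big => [l | l]; rewrite orbit_rep_eqE // => lr.
by rewrite (coord_fixedU fa lr).
Qed.

End Orbits.

Section BifreeBasis.
Hypothesis Y_free : forall s y, s \in S -> y \in Y ->
  (i s * y = y -> s = 1%g) /\ (y * i s = y -> s = 1%g).

Lemma interior_cancel_basisl z : z \in Y -> {in S &, forall s t, i s * z = i t * z -> s = t}.
Proof.
move=> zY s t sS tS st.
have : i (t^-1 * s)%g * z = z.
  by rewrite (interiorM i_int) ?groupV // -mulrA st mulrA (interiorVl i_int) // mul1r.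
by move/(Y_free (groupM (groupVr tS) sS) zY).1/eqP; rewrite -eq_mulVg1 eq_sym => /eqP.
Qed.

Lemma interior_cancel_basisr z : z \in Y -> {in S &, forall s t, z * i s = z * i t -> s = t}.
Proof.
move=> zY s t sS tS st.
have : z * i (s * t^-1)%g = z.
  by rewrite (interiorM i_int) ?groupV // mulrA st -mulrA (interiorVr i_int) // mulr1.
by move/(Y_free (groupM sS (groupVr tS)) zY).2/eqP; rewrite -eq_mulgV1 => /eqP.
Qed.

(* [phi_z : P_z -> S] of the proof sketch; bifreeness makes [twist z t] unique. *)
Definition twist_dom (z : A) : {set gT} := [set t in S | [exists s in S, i s * z == z * i t]].

Definition twist (z : A) (t : gT) : gT := odflt 1%g [pick s in S | i s * z == z * i t].

Lemma twistP z t : t \in twist_dom z -> twist z t \in S /\ i (twist z t) * z = z * i t.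
Proof.
rewrite inE => /andP[_ /existsP[s /andP[sS /eqP szt]]].
rewrite /twist; case: pickP => [s' /andP[s'S /eqP //]|/(_ s)].
by rewrite sS szt eqxx.
Qed.

Lemma twist_dom_sub z : twist_dom z \subset S.
Proof. by apply/subsetP => t; rewrite inE => /andP[]. Qed.

Lemma group_set_twist_dom z : group_set (twist_dom z).
Proof.
apply/group_setP; split.
  rewrite inE group1 /=; apply/existsP; exists 1%g.
  by rewrite group1 (interior1 i_int) mul1r mulr1 eqxx.
move=> t1 t2; rewrite !inE => /andP[t1S /existsP[s1 /andP[s1S /eqP e1]]].
case/andP=> t2S /existsP[s2 /andP[s2S /eqP e2]].
rewrite groupM //; apply/existsP; exists (s1 * s2)%g; rewrite groupM //=.
by rewrite !(interiorM i_int) // -mulrA e2 mulrA e1 mulrA.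
Qed.

Canonical twist_dom_group z := Group (group_set_twist_dom z).

Lemma twistM z : z \in Y -> {in twist_dom z &, {morph twist z : x y / (x * y)%g}}.
Proof.
move=> zY t1 t2 t1z t2z; have [s1S e1] := twistP t1z; have [s2S e2] := twistP t2z.
have t12z : (t1 * t2)%g \in twist_dom z by rewrite groupM.
have [sS e] := twistP t12z.
have t1S := subsetP (twist_dom_sub z) _ t1z; have t2S := subsetP (twist_dom_sub z) _ t2z.
apply: (interior_cancel_basisl zY) => //; first by rewrite groupM.
by rewrite e (interiorM i_int) // -mulrA e2 mulrA e1 -mulrA -(interiorM i_int).
Qed.

Lemma inj_hom_twist z : z \in Y -> inj_hom (twist_dom z) S (twist z).
Proof.
move=> zY; split; [exact: twistM | | by move=> t /twistP[]].
move=> t1 t2 t1z t2z e12; have [_ e1] := twistP t1z; have [_ e2] := twistP t2z.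
by apply: (interior_cancel_basisr zY); rewrite ?(subsetP (twist_dom_sub z)) // -e1 -e2 e12.
Qed.

Variables (p : nat) (O_local : is_local O) (k_char : residue_char O p).
Hypotheses (pS : (p.-group S)%g) (k_closed : residue_alg_closed O).

Lemma act_idx_Delta_twist k :
  {in Delta (twist (bvec k)) (twist_dom (bvec k)), forall u, act_idx u k = k}.
Proof.
move=> _ /imsetP[t tz ->]; have [sS twist_t] := twistP tz.
have tS := subsetP (twist_dom_sub _) _ tz.
apply: bvec_inj; rewrite act_idxE ?inE ?sS //.
apply/(actA_fixedE i_int _ _ tS); exact: twist_t.
Qed.

Lemma FHom_twist k : FHom i (twist_dom (bvec k)) S (twist (bvec k)).
Proof.
have kY : bvec k \in Y := mem_nth 0 (ltn_ord k).
split; first exact: inj_hom_twist.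
have DS : Delta (twist (bvec k)) (twist_dom (bvec k)) \subset SS.
  by apply: Delta_sub (twist_dom_sub _) _ => t /twistP[].
pose U := Group (group_set_Delta (twistM kY)).
have pU : (p.-group U)%g by rewrite /pgroup card_Delta; apply: pgroupS (twist_dom_sub _) pS.
exists (bvec k); split.
  by move=> u uU; rewrite -act_idxE ?(subsetP DS) // act_idx_Delta_twist.
exact: (bvec_notin_bq_kernel (U := U) DS O_local k_char pU (@act_idx_Delta_twist k)).
Qed.

Section LiftUnits.
Variable u : 'I_n -> A.
Hypothesis u_unit : forall k, is_unitA (u k).
Hypothesis u_twisted : forall k, twisted_fixed i (twist_dom (bvec k)) (twist (bvec k)) (u k).

Local Notation rep := (orbit_rep (setX_group S S)).
Local Notation mover := (orbit_mover (setX_group S S)).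

(* The stabiliser of [bvec r] in [S x S] is the graph of [twist (bvec r)]. *)
Lemma actA_stab_twisted x r : x \in SS -> act_idx x r = r -> actA i x (u r) = u r.
Proof.
case: x => s t; rewrite inE => /andP[sS tS] /= xr.
have r_fixed : i s * bvec r = bvec r * i t.
  by apply/(actA_fixedE i_int _ _ tS); rewrite -act_idxE ?inE ?sS // xr.
have tr : t \in twist_dom (bvec r).
  by rewrite inE tS; apply/existsP; exists s; rewrite sS r_fixed eqxx.
have [twistS twist_t] := twistP tr.
have <- : twist (bvec r) t = s.
  by apply: (interior_cancel_basisl (mem_nth 0 (ltn_ord r))); rewrite ?twist_t.
exact/(actA_fixedE i_int _ _ tS)/u_twisted.
Qed.

Definition unit_lift (k : 'I_n) : A := actA i (mover k) (u (rep k)).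

Lemma unit_liftE k v : v \in SS -> act_idx v (rep k) = k -> unit_lift k = actA i v (u (rep k)).
Proof.
move=> vS vk; have [gS gk] := orbit_moverP (subxx SS) k.
have gvS : (v^-1 * mover k)%g \in SS by rewrite groupM ?groupV.
have fix_rep : act_idx (v^-1 * mover k)%g (rep k) = rep k.
  by rewrite act_idxM ?groupV // gk -{1}vk act_idxK.
by rewrite /unit_lift -(mulKVg v (mover k)) (actAM i_int) // actA_stab_twisted.
Qed.

Lemma unit_lift_act v k : v \in SS -> unit_lift (act_idx v k) = actA i v (unit_lift k).
Proof.
move=> vS; have [gS gk] := orbit_moverP (subxx SS) k.
have rep_vk : rep (act_idx v k) = rep k.
  by apply: (orbit_rep_eq (subxx SS)); apply/imsetP; exists v.
rewrite (@unit_liftE _ (v * mover k)%g) ?groupM // rep_vk ?(actAM i_int) //.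
by rewrite act_idxM ?gk.
Qed.

Lemma unit_lift_unit k : is_unitA (unit_lift k).
Proof. by apply: (actA_is_unitA i_int); [case: (orbit_moverP (subxx SS) k) | exact: u_unit]. Qed.

Definition lerp_basis (l : O) (k : 'I_n) : A := bvec k + l *: (unit_lift k - bvec k).

Lemma actA_lerp_basis l v k : v \in SS -> actA i v (lerp_basis l k) = lerp_basis l (act_idx v k).
Proof. by move=> vS; rewrite /lerp_basis actAD actAZ actAB unit_lift_act // act_idxE. Qed.

Definition lift_mx : 'M[O]_n := \matrix_k coord_row bvec_basis (unit_lift k).

Lemma lerp_basisE l k : lerp_basis l k = comb bvec (row k (1%:M + l *: (lift_mx - 1%:M))).
Proof.
by rewrite /lerp_basis !linearD !linearZ !linearN /= rowK row1 coord_rowK comb_delta scalerN.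
Qed.

Lemma exists_unit_basis_lerp :
  exists Y' : seq A, [/\ is_basis Y', inv_basis S i Y' & forall y, y \in Y' -> is_unitA y].
Proof.
pose lmul := lmul_mx bvec_basis.
pose fs := det_lerp 1%:M lift_mx ::
  [seq det_lerp (lmul (bvec k)) (lmul (unit_lift k)) | k <- enum 'I_n].
have [l l_unit] : exists l, {in fs, forall f, f.[l] \is a GRing.unit}.
  apply: (exists_common_unit_value O_local k_closed) => _ /predU1P[-> | /mapP[k _ ->]].
    by exists 0; rewrite horner_det_lerp scale0r addr0 det1 unitr1.
  by exists 1; rewrite horner_det_lerp scale1r addrC subrK; apply/is_unitA_det/unit_lift_unit.
exists [seq lerp_basis l k | k <- enum 'I_n]; split.
- apply: (is_basis_fbasis _ _ (fbasis_unit_det bvec_basis _)).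
  + by rewrite size_map size_enum_ord.
  + by move=> k; rewrite (nth_map k) ?size_enum_ord // nth_ord_enum lerp_basisE.
  by rewrite -horner_det_lerp l_unit ?mem_head.
- by apply: inv_basis_equivariant => v k vS; apply: actA_lerp_basis.
move=> _ /mapP[k _ ->]; apply/(is_unitA_det bvec_basis).
rewrite /lerp_basis linearD linearZ linearB -horner_det_lerp l_unit //.
by rewrite inE; apply/orP; right; apply: map_f; rewrite mem_enum.
Qed.

End LiftUnits.

Lemma exists_unit_basis :
  (forall (P : {group gT}) (phi : gT -> gT), P \subset S -> FHom i P S phi ->
     exists a : A, is_unitA a /\ twisted_fixed i P phi a) ->
  exists Y' : seq A, [/\ is_basis Y', inv_basis S i Y' & forall y, y \in Y' -> is_unitA y].
Proof.
move=> twisted_units.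
have [u u_spec] := fin_all_exists
  (fun k => twisted_units _ _ (twist_dom_sub (bvec k)) (FHom_twist k)).
exact: (exists_unit_basis_lerp (fun k => (u_spec k).1) (fun k => (u_spec k).2)).
Qed.

End BifreeBasis.

Lemma twisted_fixed_unit_of_unit_basis (P : {group gT}) (phi : gT -> gT) :
  (forall y, y \in Y -> is_unitA y) -> P \subset S -> FHom i P S phi ->
  exists a : A, is_unitA a /\ twisted_fixed i P phi a.
Proof.
move=> Y_unit PS [[phiM _ phiS] [a [a_fixed a_notin]]].
pose U := Group (group_set_Delta phiM).
have US : U \subset SS := Delta_sub PS phiS.
case: (pickP (fun k => U \subset stab_idx U k)) => [k /subsetP k_fixed | no_fixed].
  exists (bvec k); split; first exact/Y_unit/mem_nth.
  move=> x xP; have xS := subsetP PS x xP.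
  have /k_fixed : (phi x, x) \in U by apply/imsetP; exists x.
  rewrite inE => /andP[/(subsetP US) uS /eqP fixed_k].
  by apply/(actA_fixedE i_int _ _ xS); rewrite -act_idxE // fixed_k.
case: a_notin; apply: (bq_kernel_fixedpoint_free US) a_fixed => k.
by rewrite properE stab_idx_sub no_fixed.
Qed.

End InvariantBasis.

Theorem proposition4p7 (O : idomainType) (p : nat)
  (O_local : is_local O) (O_noeth : noetherian O) (O_complete : m_complete O)
  (k_char : residue_char O p) (k_closed : residue_alg_closed O)
  (gT : finGroupType) (S : {group gT}) (pS : (p.-group S)%g)
  (A : algType O) (i : gT -> A) (i_int : interior S i) (A_bifree : bifree S i) :
  (exists Y : seq A, [/\ is_basis Y, inv_basis S i Y & forall y, y \in Y -> is_unitA y])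
  <->
  (forall (P : {group gT}) (phi : gT -> gT), P \subset S -> FHom i P S phi ->
     exists a : A, is_unitA a /\ twisted_fixed i P phi a).
Proof.
split=> [[Y [Y_basis Y_inv Y_unit]] P phi PS phi_hom | twisted_units].
  exact: (twisted_fixed_unit_of_unit_basis i_int Y_basis Y_inv Y_unit PS phi_hom).
have [Y [Y_basis Y_inv Y_free]] := A_bifree.
exact: (exists_unit_basis i_int Y_basis Y_inv Y_free O_local k_char pS k_closed twisted_units).
Qed.
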